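(* Let $l\ge 1$ be an integer and let $x(1),\dots,x(l)\in[0,1)$. Define real numbers $z(1),\dots,z(l)$ by $z(1)=x(1)$ and, for $k=1,\dots,l-1$, with $d_k=(x(k+1)-2z(k))_{\mathrm{mod}\,1}\in[0,1)$, $$z(k+1)=\begin{cases}2z(k)+d_k & \text{if } d_k\in[0,1/3),\\ 2z(k)+1/3 & \text{if } d_k\in[1/3,2/3),\\ 2z(k) & \text{if } d_k\in[2/3,1).\end{cases}$$ Let $\theta\in[0,1)$ and suppose that for every $k=1,\dots,l$ the point $(2^{k-1}\theta)_{\mathrm{mod}\,1}$ lies in the open arc $(x(k),x(k)+1/3)$ on the circle, i.e. $\big((2^{k-1}\theta)_{\mathrm{mod}\,1}-x(k)\big)_{\mathrm{mod}\,1}\in(0,1/3)$. Then $\theta$ lies in the arc on the circle $\big[z(l)/2^{l-1},\,(z(l)+1/3)/2^{l-1}\big]$ (of length $1/(3\cdot 2^{l-1})$), i.e. there is an integer $m$ with $\theta+m\in\big[z(l)/2^{l-1},(z(l)+1/3)/2^{l-1}\big]$. Consequently the estimate $\hat\theta=\big((z(l)+1/6)/2^{l-1}\big)_{\mathrm{mod}\,1}$ satisfies $|\hat\theta-\theta|_1\le 1/(3\cdot 2^{l})$.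
   Context: Points of $[0,1)$ are regarded as points on a circle of unit circumference; $(a)_{\mathrm{mod}\,1}$ denotes the representative of $a$ in $[0,1)$. An arc $[a,b]$ (or $(a,b)$) with real $a\le b$, $b-a<1$, is the set $\{t_{\mathrm{mod}\,1}: t\in[a,b]\}$ (resp. $t\in(a,b)$). For $\theta,\hat\theta\in[0,1)$, $|\hat\theta-\theta|_1=\min\big((\hat\theta-\theta)_{\mathrm{mod}\,1},(\theta-\hat\theta)_{\mathrm{mod}\,1}\big)$. *)

From Stdlib Require Import Reals Lra Lia.
Open Scope R_scope.

(* (a)_{mod 1}: representative of a in [0,1).  Int_part is the floor. *)
Definition mod1 (a : R) : R := a - IZR (Int_part a).

Definition dist1 (a b : R) : R := Rmin (mod1 (a - b)) (mod1 (b - a)).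

Definition zstep (zk xk1 : R) : R :=
  let d := mod1 (xk1 - 2 * zk) in
  if Rlt_dec d (1/3) then 2 * zk + d
  else if Rlt_dec d (2/3) then 2 * zk + 1/3
  else 2 * zk.

(* zrec x j = z(j+1), with x indexed from 1 *)
Fixpoint zrec (x : nat -> R) (j : nat) : R :=
  match j with
  | O => x 1%nat
  | S j' => zstep (zrec x j') (x (j' + 2)%nat)
  end.

Definition z (x : nat -> R) (k : nat) : R := zrec x (k - 1).

(* Lift θ to the real θ' := x(1) + (θ - x(1))_{mod 1}, which differs from θ by an
   integer.  By induction, 0 <= 2^(k-1) θ' - z(k) <= 1/3 for every k: from
   t := 2^(k-1) θ' - z(k) in [0,1/3], the arc hypothesis at k+1 and the definition
   of d_k show that 2t - d_k - s is an integer in (-4/3, 2/3), where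
   s := (2^k θ' - x(k+1))_{mod 1} lies in (0,1/3); so it is 0 or -1, and each of the
   three branches of the recursion keeps 2^k θ' - z(k+1) in [0,1/3].  Dividing by
   2^(l-1) at k = l gives the arc, whose midpoint is the estimate. *)

From Stdlib Require Import Reals Lra Lia ZArith.
Open Scope R_scope.

Lemma mod1_bounds (a : R) : 0 <= mod1 a < 1.
Proof. unfold mod1. destruct (base_Int_part a). lra. Qed.

Lemma mod1_decomp (a : R) : a = mod1 a + IZR (Int_part a).
Proof. unfold mod1. ring. Qed.

Lemma mod1_id_shift (e : R) (k : Z) : 0 <= e < 1 -> mod1 (e + IZR k) = e.
Proof.
  intros He. unfold mod1.
  destruct (base_Int_part (e + IZR k)) as [Hlo Hhi].
  assert (Int_part (e + IZR k) < k + 1)%Z.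
  { apply lt_IZR. rewrite plus_IZR. simpl. lra. }
  assert (k - 1 < Int_part (e + IZR k))%Z.
  { apply lt_IZR. rewrite minus_IZR. simpl. lra. }
  replace (Int_part (e + IZR k)) with k by lia. ring.
Qed.

Lemma mod1_periodic (a : R) (k : Z) : mod1 (a + IZR k) = mod1 a.
Proof.
  replace (a + IZR k) with (mod1 a + IZR (Int_part a + k)).
  - apply mod1_id_shift, mod1_bounds.
  - rewrite plus_IZR. unfold mod1. ring.
Qed.

Lemma mod1_mod1_sub (a b : R) : mod1 (mod1 a - b) = mod1 (a - b).
Proof.
  replace (mod1 a - b) with (a - b + IZR (- Int_part a)).
  - apply mod1_periodic.
  - rewrite opp_IZR. unfold mod1. ring.
Qed.

Lemma dist1_le_abs (a b : R) (k : Z) :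
  Rabs (a - b - IZR k) < 1 -> dist1 a b <= Rabs (a - b - IZR k).
Proof.
  set (e := a - b - IZR k). intros He. unfold dist1.
  destruct (Rle_lt_dec 0 e) as [Hpos | Hneg].
  - rewrite Rabs_pos_eq in * by lra.
    replace (a - b) with (e + IZR k) by (unfold e; ring).
    rewrite mod1_id_shift by lra. apply Rmin_l.
  - rewrite Rabs_left in * by lra.
    replace (b - a) with (- e + IZR (- k)) by (unfold e; rewrite opp_IZR; ring).
    rewrite mod1_id_shift by lra. apply Rmin_r.
Qed.

Lemma IZR_between_m2_1 (K : Z) : -2 < IZR K < 1 -> IZR K = 0 \/ IZR K = -1.
Proof.
  intros [Hlo Hhi].
  assert (-2 < K)%Z by (apply lt_IZR; simpl; lra).
  assert (K < 1)%Z by (apply lt_IZR; simpl; lra).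
  assert (K = 0 \/ K = -1)%Z as [-> | ->] by lia; simpl; auto.
Qed.

Lemma zstep_tracks (zk w xn : R) :
  0 <= w - zk <= 1/3 -> 0 < mod1 (2 * w - xn) < 1/3 ->
  0 <= 2 * w - zstep zk xn <= 1/3.
Proof.
  intros Ht Hs. unfold zstep.
  set (d := mod1 (xn - 2 * zk)).
  set (s := mod1 (2 * w - xn)) in Hs.
  pose proof (mod1_bounds (xn - 2 * zk)) as Hd; fold d in Hd.
  assert (Hint : 2 * (w - zk) - d - s
                 = IZR (Int_part (xn - 2 * zk) + Int_part (2 * w - xn))).
  { rewrite plus_IZR.
    pose proof (mod1_decomp (xn - 2 * zk)) as Hdd; fold d in Hdd.
    pose proof (mod1_decomp (2 * w - xn)) as Hss; fold s in Hss. lra. }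
  assert (H01 : 2 * (w - zk) - d - s = 0 \/ 2 * (w - zk) - d - s = -1).
  { rewrite Hint. apply IZR_between_m2_1. rewrite <- Hint. lra. }
  destruct (Rlt_dec d (1/3)); [|destruct (Rlt_dec d (2/3))]; destruct H01; lra.
Qed.

Lemma pow2_IZR (n : nat) : 2 ^ n = IZR (2 ^ Z.of_nat n).
Proof. rewrite pow_IZR. reflexivity. Qed.

Lemma zrec_tracks_lift (l : nat) (x : nat -> R) (theta : R)
  (harc : forall k : nat, (1 <= k <= l)%nat ->
     0 < mod1 (mod1 (2 ^ (k - 1) * theta) - x k) < 1/3) :
  exists m : Z, forall j : nat, (j < l)%nat ->
    0 <= 2 ^ j * (theta + IZR m) - zrec x j <= 1/3.
Proof.
  exists (- Int_part (theta - x 1%nat))%Z.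
  set (theta' := theta + _).
  intros j. induction j as [|j IH]; intros Hj.
  - pose proof (harc 1%nat ltac:(lia)) as H1. simpl in H1.
    rewrite Rmult_1_l, mod1_mod1_sub in H1.
    pose proof (mod1_decomp (theta - x 1%nat)).
    unfold theta'. rewrite opp_IZR. simpl. lra.
  - pose proof (harc (S (S j)) ltac:(lia)) as Ha.
    replace (S (S j) - 1)%nat with (S j) in Ha by lia.
    rewrite mod1_mod1_sub in Ha.
    replace (2 ^ S j * theta - x (S (S j)))
      with (2 * (2 ^ j * theta') - x (S (S j))
            + IZR (2 ^ Z.of_nat (S j) * Int_part (theta - x 1%nat))) in Ha
      by (rewrite mult_IZR, <- pow2_IZR; unfold theta'; rewrite opp_IZR; simpl; ring).
    rewrite mod1_periodic in Ha.
    simpl zrec. replace (j + 2)%nat with (S (S j)) by lia.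
    replace (2 ^ S j * theta') with (2 * (2 ^ j * theta')) by (simpl; ring).
    apply zstep_tracks; [apply IH; lia | exact Ha].
Qed.

Lemma dist1_midpoint_scaled (P zz theta : R) (m : Z) :
  1 <= P -> 0 <= P * (theta + IZR m) - zz <= 1/3 ->
  dist1 (mod1 ((zz + 1/6) / P)) theta <= 1/6 * / P.
Proof.
  intros HP Ht.
  set (t := P * (theta + IZR m) - zz) in Ht.
  assert (HinvP : 0 < / P <= 1).
  { split; [apply Rinv_0_lt_compat | rewrite <- Rinv_1; apply Rinv_le_contravar]; lra. }
  set (c := (zz + 1/6) / P).
  assert (Hdev : mod1 c - theta - IZR (m - Int_part c) = (1/6 - t) * / P).
  { rewrite minus_IZR. unfold mod1, c, t. field. lra. }
  assert (Hbound : Rabs ((1/6 - t) * / P) <= 1/6 * / P).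
  { rewrite Rabs_mult, (Rabs_pos_eq (/ P)) by lra.
    apply Rmult_le_compat_r; [lra | apply Rabs_le; lra]. }
  rewrite <- Hdev in Hbound.
  refine (Rle_trans _ _ _ (dist1_le_abs _ _ (m - Int_part c) _) Hbound); lra.
Qed.

Theorem mainTheorem1 (l : nat) (hl : (1 <= l)%nat) (x : nat -> R)
  (hx : forall k : nat, (1 <= k <= l)%nat -> 0 <= x k < 1)
  (theta : R) (htheta : 0 <= theta < 1)
  (harc : forall k : nat, (1 <= k <= l)%nat ->
     0 < mod1 (mod1 (2 ^ (k - 1) * theta) - x k) < 1/3) :
  (exists m : Z,
     z x l / 2 ^ (l - 1) <= theta + IZR m <= (z x l + 1/3) / 2 ^ (l - 1))
  /\ dist1 (mod1 ((z x l + 1/6) / 2 ^ (l - 1))) theta <= 1 / (3 * 2 ^ l).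
Proof.
  destruct (zrec_tracks_lift l x theta harc) as [m Hlift].
  pose proof (Hlift (l - 1)%nat ltac:(lia)) as Ht.
  unfold z. set (P := 2 ^ (l - 1)) in *.
  assert (HP : 1 <= P) by (apply pow_R1_Rle; lra).
  split.
  - exists m.
    replace (theta + IZR m) with ((zrec x (l - 1) + (P * (theta + IZR m) - zrec x (l - 1))) / P)
      by (field; lra).
    unfold Rdiv. split; apply Rmult_le_compat_r; try (apply Rlt_le, Rinv_0_lt_compat); lra.
  - replace (1 / (3 * 2 ^ l)) with (1/6 * / P).
    + exact (dist1_midpoint_scaled P _ theta m HP Ht).
    + assert (H2l : 2 ^ l = 2 * P).
      { unfold P. replace l with (S (l - 1)) at 1 by lia. reflexivity. }
      rewrite H2l. field. lra.
Qed.
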